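(* Let $N$ be a sub-sound tWF net, $M$ a sub-sound pWF net whose node set is disjoint from that of $N$, and $p$ a place of $N$. Then the tWF net $N\otimes_p M$ is sub-sound.
   Context: Petri nets and markings. A Petri net is a triple $(P,T,F)$ with $P$ a finite set of places, $T$ a finite set of transitions, $P\cap T=\emptyset$, and $F\subseteq (P\times T)\cup(T\times P)$. For a node $x$, $\bullet x=\{y\mid (y,x)\in F\}$, $x\bullet=\{y\mid (x,y)\in F\}$. A marking is a multiset over $P$ (a function $P\to\mathbb N$); sets of places are identified with bags of multiplicity one, $+,-,\le$ are pointwise, and $k.m$ is the sum of $k$ copies of $m$. Transition $t$ is enabled at $m$ iff $\bullet t\le m$, firing gives $m-\bullet t+t\bullet$, and $m\xrightarrow{*}m'$ denotes reachability by a finite (possibly empty) firing sequence. Workflow nets. A pWF net is $(P,T,F,I,O)$ with $(P,T,F)$ a Petri net, $I,O\subseteq P$ non-empty, every node reachable by a directed path from some node of $I$, and some node of $O$ reachable from every node. A tWF net is the same with $I,O$ non-empty subsets of $T$. Input nodes may have incoming edges and output nodes outgoing edges. The place-completion $\mathrm{pc}(N)$ of a tWF net $N=(P,T,F,I,O)$ is obtained by adding two fresh places $p_i,p_o$ with edges $(p_i,t)$ for all $t\in I$ and $(t,p_o)$ for all $t\in O$, and taking input set $\{p_i\}$ and output set $\{p_o\}$. Sub-soundness. A pWF net is sub-sound if for all integers $k\ge k'\ge 0$ and every marking $m'$: if $k.I\xrightarrow{*}m'+k'.O$ then $m'\xrightarrow{*}(k-k').O$. A tWF net is sub-sound iff its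 place-completion is. Place substitution. For a WF net $N=(P,T,F,I,O)$ and a pWF net $M=(P',T',F',I',O')$ with disjoint node sets and $p\in P$, $N\otimes_p M$ is obtained from $N$ by deleting $p$ and all edges incident to $p$, adding all nodes and edges of $M$, adding an edge $(t,p')$ for each $t\in\bullet_N p$ and $p'\in I'$, and an edge $(p',t)$ for each $p'\in O'$ and $t\in p\bullet_N$; its input set is $(I\setminus\{p\})\cup I'$ if $p\in I$ and $I$ otherwise, and its output set is $(O\setminus\{p\})\cup O'$ if $p\in O$ and $O$ otherwise. *)

From mathcomp Require Import all_boot.
Set Implicit Arguments. Unset Strict Implicit. Unset Printing Implicit Defensive.

(* A Petri net (P, T, F) with P, T disjoint finite types of places and
   transitions; the flow relation F is split into its P x T part [pre]
   and its T x P part [post]. *)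
Record PN (P T : finType) := MkPN {
  pre  : P -> T -> bool;
  post : T -> P -> bool
}.

Definition flow (P T : finType) (N : PN P T) : rel (P + T)%type :=
  fun x y => match x, y with
             | inl q, inr t => pre N q t
             | inr t, inl q => post N t q
             | _, _ => false
             end.

Definition marking (P : finType) := {ffun P -> nat}.

Definition set_bag (P : finType) (A : {set P}) : marking P :=
  [ffun q => nat_of_bool (q \in A)].
Definition mscale (P : finType) (k : nat) (m : marking P) : marking P :=
  [ffun q => k * m q].
Definition madd (P : finType) (m1 m2 : marking P) : marking P :=
  [ffun q => m1 q + m2 q].

Definition enabled (P T : finType) (N : PN P T) (m : marking P) (t : T) : Prop :=
  forall q, nat_of_bool (pre N q t) <= m q.
Definition fire (P T : finType) (N : PN P T) (m : marking P) (t : T) : marking P :=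
  [ffun q => m q - nat_of_bool (pre N q t) + nat_of_bool (post N t q)].

Inductive reach (P T : finType) (N : PN P T) : marking P -> marking P -> Prop :=
| reach_refl m : reach N m m
| reach_step m t m' : enabled N m t -> reach N (fire N m t) m' -> reach N m m'.

Definition WF_cond (P T : finType) (N : PN P T) (I O : {set (P + T)%type}) : Prop :=
  I != set0 /\ O != set0 /\
  (forall x, exists2 i, i \in I & connect (flow N) i x) /\
  (forall x, exists2 o, o \in O & connect (flow N) x o).

Definition is_pWF (P T : finType) (N : PN P T) (I O : {set P}) : Prop :=
  WF_cond N (inl @: I) (inl @: O).
Definition is_tWF (P T : finType) (N : PN P T) (I O : {set T}) : Prop :=
  WF_cond N (inr @: I) (inr @: O).

Definition subsound_p (P T : finType) (N : PN P T) (I O : {set P}) : Prop :=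
  forall (k k' : nat) (m' : marking P), k' <= k ->
    reach N (mscale k (set_bag I)) (madd m' (mscale k' (set_bag O))) ->
    reach N m' (mscale (k - k') (set_bag O)).

(* Place-completion of a tWF net: the new places are inr true (p_i) and
   inr false (p_o). *)
Definition pc_net (P T : finType) (N : PN P T) (I O : {set T}) : PN (P + bool)%type T :=
  MkPN (fun q t => match q with
                   | inl q0 => pre N q0 t
                   | inr true => t \in I
                   | inr false => false
                   end)
       (fun t q => match q with
                   | inl q0 => post N t q0
                   | inr true => false
                   | inr false => t \in O
                   end).

Definition subsound_t (P T : finType) (N : PN P T) (I O : {set T}) : Prop :=
  subsound_p (pc_net N I O) [set inr true] [set inr false].

(* Place substitution N (x)_p M, nodes of N and M being disjoint by
   construction (disjoint sums).  Places: those of N other than p, plus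
   those of M; transitions: those of N plus those of M. *)
Definition subst_places (P : finType) (p : P) := {q : P | q != p}.

Definition subst_net (P T P' T' : finType) (N : PN P T) (p : P)
    (M : PN P' T') (I' O' : {set P'})
  : PN (subst_places p + P')%type (T + T')%type :=
  MkPN (fun q t => match q, t with
                   | inl q0, inl t0 => pre N (val q0) t0
                   | inl _, inr _ => false
                   | inr q', inl t0 => (q' \in O') && pre N p t0
                   | inr q', inr t' => pre M q' t'
                   end)
       (fun t q => match t, q with
                   | inl t0, inl q0 => post N t0 (val q0)
                   | inl t0, inr q' => post N t0 p && (q' \in I')
                   | inr _, inl _ => false
                   | inr t', inr q' => post M t' q'
                   end).

(* Let C be the place-completion of N (x)_p M.  A marking x of C is split into
   its "inner" part (the places of M) and, for a chosen number n of tokens on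
   p, its "outer" part (a marking of pc(N) with n tokens on p).  The proof is a
   two-way simulation between C and the pair (pc(N), M):

   - Forwards: along every run of C from k.p_i, some pair (a, c) witnesses that
     M runs from a.I' to  inner x + c.O'  while pc(N) runs from k.p_i to
     outer x (a - c); an outer transition consuming from p takes one full copy
     of O' (so c grows) and one producing into p adds a copy of I' (a grows).
     Sub-soundness of M gives c <= a along the way.
   - Backwards: every run of pc(N) lifts to C, a token on p being represented
     by a full copy of O'; firing a transition that produces into p adds a copy
     of I', which M turns into a copy of O' by sub-soundness.

   Given C reaching m' + k'.p_o, the forward simulation and sub-soundness of M
   and of N yield runs  m' ->* lift (outer m' (a-c)) ->* (k-k').p_o. *)
From mathcomp Require Import all_boot zify.
Set Implicit Arguments. Unset Strict Implicit. Unset Printing Implicit Defensive.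

Ltac marking_eq := apply/ffunP => ?; rewrite !ffunE /=; lia.

Section Reachability.
Variables (P T : finType) (N : PN P T).

Lemma reach_trans m1 m2 m3 : reach N m1 m2 -> reach N m2 m3 -> reach N m1 m3.
Proof. by elim=> [//|m t m' en _ IH] /IH; apply: reach_step. Qed.

Lemma reach_fire m1 m2 t :
  reach N m1 m2 -> enabled N m2 t -> reach N m1 (fire N m2 t).
Proof. by move=> H en; apply: reach_trans H (reach_step en (reach_refl _ _)). Qed.

Lemma enabled_madd z m t : enabled N m t -> enabled N (madd z m) t.
Proof. by move=> en q; rewrite ffunE; apply: leq_trans (en q) (leq_addl _ _). Qed.

Lemma fire_madd z m t :
  enabled N m t -> fire N (madd z m) t = madd z (fire N m t).
Proof. by move=> en; apply/ffunP => q; move: (en q); rewrite !ffunE; lia. Qed.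

Lemma reach_madd z m1 m2 : reach N m1 m2 -> reach N (madd z m1) (madd z m2).
Proof.
elim=> [m|m t m' en _ IH]; first exact: reach_refl.
by apply: reach_step (enabled_madd z en) _; rewrite fire_madd.
Qed.

Lemma reach_empty m m' : (forall t, exists q, post N t q) ->
  reach N m m' -> (forall q, m' q = 0) -> forall q, m q = 0.
Proof.
move=> hpost; elim=> [//|m0 t m1 en _ IH] /IH h0 q.
by case: (hpost t) => q1 hq1; move: (h0 q1) (en q1); rewrite ffunE hq1; lia.
Qed.

End Reachability.

Lemma maddC (P : finType) (m1 m2 : marking P) : madd m1 m2 = madd m2 m1.
Proof. by apply/ffunP => q; rewrite !ffunE addnC. Qed.

Section SubsoundNet.
Variables (P T : finType) (M : PN P T) (I O : {set P}).
Hypothesis wfM : is_pWF M I O.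
Hypothesis ssM : subsound_p M I O.

(* In a pWF net every transition reaches an output place, so it has a
   successor place. *)
Lemma pWF_post_nonempty t : exists q, post M t q.
Proof.
case: wfM => _ [_ [_ /(_ (inr t))]] [_ /imsetP [q _ ->]].
case/connectP => [[|[q' | t'] s]] //= /andP [hq' _] _; by exists q'.
Qed.

Lemma pWF_out_nonempty : exists q, q \in O.
Proof. by case: wfM => _ [/set0Pn [_ /imsetP [q hq _]] _]; exists q. Qed.

Lemma subsound_out_le_in a c mu :
  reach M (mscale a (set_bag I)) (madd mu (mscale c (set_bag O))) -> c <= a.
Proof.
move=> H; rewrite leqNgt; apply/negP => ltac.
have E : madd mu (mscale c (set_bag O)) =
         madd (madd mu (mscale (c - a) (set_bag O))) (mscale a (set_bag O)).
  by apply/ffunP => q; rewrite !ffunE; case: (q \in O) => /=; lia.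
(* Sub-soundness would then empty the surplus c - a copies of O', but no
   transition of M can lead to the empty marking from a non-empty one. *)
move: H; rewrite E => /(ssM (leqnn a)); rewrite subnn => H.
have [q hq] := pWF_out_nonempty.
have := reach_empty pWF_post_nonempty H _ q; rewrite !ffunE hq /=.
by move/(_ (fun q0 => ffunE _ _)); lia.
Qed.

(* Sub-soundness with k' = 0: b copies of I can be turned into b of O. *)
Lemma subsound_complete b : reach M (mscale b (set_bag I)) (mscale b (set_bag O)).
Proof.
have := @ssM b 0 (mscale b (set_bag I)) (leq0n b); rewrite subn0; apply.
suff -> : madd (mscale b (set_bag I)) (mscale 0 (set_bag O)) =
          mscale b (set_bag I) by apply: reach_refl.
by marking_eq.
Qed.

End SubsoundNet.

Section Substitution.
Variables (P T P' T' : finType) (N : PN P T) (I O : {set T})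
          (M : PN P' T') (I' O' : {set P'}) (p : P).

Local Notation QC := ((subst_places p + P') + bool)%type.
Local Notation C := (pc_net (subst_net N p M I' O') (inl @: I) (inl @: O)).
Local Notation Nc := (pc_net N I O).

Lemma mem_inl_imset (A : {set T}) t : (@inl T T' t \in inl @: A) = (t \in A).
Proof. exact/mem_imset/inl_inj. Qed.

Lemma mem_inr_inl_imset (A : {set T}) t : (@inr T T' t \in inl @: A) = false.
Proof. by apply/imsetP => -[]. Qed.

Definition inner (x : marking QC) : marking P' := [ffun q' => x (inl (inr q'))].

Definition outer (x : marking QC) (n : nat) : marking (P + bool)%type :=
  [ffun q => match q with
    | inl q0 => if insub q0 is Some s then x (inl (inl s)) else n
    | inr b => x (inr b) end].

Definition embed (mu : marking P') : marking QC :=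
  [ffun q => if q is inl (inr q') then mu q' else 0].

(* A marking of pc(N) seen in C: each token on p becomes a copy of O'. *)
Definition lift (nu : marking (P + bool)%type) : marking QC :=
  [ffun q => match q with
   | inl (inl s) => nu (inl (val s))
   | inl (inr q') => nu (inl p) * (q' \in O')
   | inr b => nu (inr b) end].

Lemma embed_reach mu1 mu2 : reach M mu1 mu2 -> reach C (embed mu1) (embed mu2).
Proof.
elim=> [m|m t m' en _ IH]; first exact: reach_refl.
have en' : enabled C (embed m) (inr t).
  by case=> [[s|q']|[]]; rewrite ffunE /= ?mem_inr_inl_imset //; apply: en.
apply: reach_step en' _.
suff -> : fire C (embed m) (inr t) = embed (fire M m t) by [].
by apply/ffunP => -[[s|q']|[]]; rewrite !ffunE /= ?mem_inr_inl_imset.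
Qed.

Lemma fire_inner x t :
  enabled C x (inr t) ->
  enabled M (inner x) t /\ inner (fire C x (inr t)) = fire M (inner x) t.
Proof.
move=> en; split=> [q'|]; first by rewrite ffunE; apply: (en (inl (inr q'))).
by apply/ffunP => q'; rewrite !ffunE.
Qed.

Lemma outer_fire_inner x n t : outer (fire C x (inr t)) n = outer x n.
Proof.
apply/ffunP => -[q0|[]]; rewrite !ffunE /= ?mem_inr_inl_imset ?addn0 ?subn0 //.
by case: insubP => [s _ _|_] //; rewrite ffunE /= addn0 subn0.
Qed.

Lemma inner_fire_outer x t : enabled C x (inl t) ->
  exists mu, inner x = madd mu (mscale (pre N p t) (set_bag O')) /\
             inner (fire C x (inl t)) = madd (mscale (post N t p) (set_bag I')) mu.
Proof.
move=> en; exists [ffun q' => inner x q' - pre N p t * (q' \in O')].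
by split; apply/ffunP => q'; move: (en (inl (inr q'))); rewrite !ffunE /=;
  case: (q' \in O'); case: (q' \in I'); case: (pre N p t); case: (post N t p);
  set X := x _; lia.
Qed.

Lemma outer_fire_outer x n t : enabled C x (inl t) -> pre N p t <= n ->
  enabled Nc (outer x n) t /\
  outer (fire C x (inl t)) (n - pre N p t + post N t p) = fire Nc (outer x n) t.
Proof.
move=> en len; split.
  case=> [q0|[]]; rewrite ffunE //=.
  + by case: insubP => [s _ <-|/negPn/eqP ->] //; apply: (en (inl (inl s))).
  + by move: (en (inr true)); rewrite /= mem_inl_imset.
apply/ffunP => -[q0|[]]; rewrite !ffunE /= ?mem_inl_imset //.
by case: insubP => [s _ <-|/negPn/eqP ->]; rewrite ?ffunE.
Qed.

Hypothesis wfM : is_pWF M I' O'.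
Hypothesis ssM : subsound_p M I' O'.

(* The forward simulation invariant relating a marking x of C, reached from
   the initial marking s of pc(N), to runs of M and of pc(N): M has been fed
   a copies of I' and c copies of O' have been consumed from it. *)
Definition simulated (s : marking (P + bool)%type) (x : marking QC) : Prop :=
  exists a c,
    reach M (mscale a (set_bag I')) (madd (inner x) (mscale c (set_bag O'))) /\
    reach Nc s (outer x (a - c)).

Lemma simulated_fire_inner s x t :
  simulated s x -> enabled C x (inr t) -> simulated s (fire C x (inr t)).
Proof.
case=> a [c [HM HN]] /fire_inner [en Efire]; exists a, c.
rewrite outer_fire_inner Efire; split=> //.
rewrite maddC -fire_madd //; apply: reach_fire; first by rewrite maddC.
exact: enabled_madd.
Qed.

Lemma simulated_fire_outer s x t :
  simulated s x -> enabled C x (inl t) -> simulated s (fire C x (inl t)).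
Proof.
case=> a [c [HM HN]] en; set b := pre N p t; set d := post N t p.
have [mu [Ex Efx]] := inner_fire_outer en.
have HM' : reach M (mscale a (set_bag I')) (madd mu (mscale (c + b) (set_bag O'))).
  by move: HM; rewrite Ex; congr reach; marking_eq.
have le_cb_a := subsound_out_le_in wfM ssM HM'.
have [enN Efire] : enabled Nc (outer x (a - c)) t /\
    outer (fire C x (inl t)) (a - c - b + d) = fire Nc (outer x (a - c)) t.
  by apply: outer_fire_outer; rewrite // leq_subRL // (leq_trans _ le_cb_a) ?leq_addr.
exists (a + d), (c + b); split.
  have := reach_madd (mscale d (set_bag I')) HM'; rewrite Efx.
  by congr reach; marking_eq.
have -> : a + d - (c + b) = a - c - b + d by lia.
by rewrite Efire; apply: reach_fire.
Qed.

Lemma simulated_reach s x y : reach C x y -> simulated s x -> simulated s y.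
Proof.
elim=> [//|x0 [t|t] x1 en _ IH] Hs; apply: IH.
  exact: simulated_fire_outer.
exact: simulated_fire_inner.
Qed.

Lemma simulated_init k :
  simulated (mscale k (set_bag [set inr true])) (mscale k (set_bag [set inr true])).
Proof.
exists 0, 0; split.
  suff -> : madd (inner (mscale k (set_bag [set inr true]))) (mscale 0 (set_bag O'))
            = mscale 0 (set_bag I') by apply: reach_refl.
  by apply/ffunP => q'; rewrite !ffunE !in_set1 /= muln0.
suff -> : outer (mscale k (set_bag [set inr true])) (0 - 0)
          = mscale k (set_bag [set inr true]) by apply: reach_refl.
apply/ffunP => -[q0|b]; rewrite !ffunE ?in_set1 //=.
by case: insubP => [s _ _|_]; rewrite ?ffunE ?in_set1 /= ?muln0.
Qed.

Lemma inner_madd_out m j :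
  inner (madd m (mscale j (set_bag [set inr false]))) = inner m.
Proof. by apply/ffunP => q'; rewrite !ffunE in_set1 /= muln0 addn0. Qed.

Lemma outer_madd_out m j n :
  outer (madd m (mscale j (set_bag [set inr false]))) n =
  madd (outer m n) (mscale j (set_bag [set inr false])).
Proof.
apply/ffunP => -[q0|b]; rewrite !ffunE ?in_set1 //=.
by case: insubP => [s _ _|_]; rewrite ?ffunE ?in_set1 /= ?muln0 ?addn0.
Qed.

Lemma lift_out j :
  lift (mscale j (set_bag [set inr false])) = mscale j (set_bag [set inr false]).
Proof. by apply/ffunP => -[[s|q']|b]; rewrite !ffunE ?in_set1 /= ?muln0. Qed.

(* One step of pc(N) is simulated in C: fire t, then let M turn the copy of
   I' it may have produced into a copy of O'. *)
Lemma lift_fire nu t : enabled Nc nu t -> reach C (lift nu) (lift (fire Nc nu t)).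
Proof.
move=> en; have := en (inl p); rewrite /= => enp.
have enC : enabled C (lift nu) (inl t).
  case=> [[s|q']|[]]; rewrite ffunE /=.
  + exact: (en (inl (val s))).
  + by move: enp; case: (q' \in O'); case: (pre N p t) => /=; set X := nu _; lia.
  + by rewrite mem_inl_imset; apply: (en (inr true)).
  + by [].
apply: reach_step enC _.
(* the common part of the markings before and after the run of M *)
pose Z : marking QC := [ffun q => match q with
   | inl (inr q') => (nu (inl p) - pre N p t) * (q' \in O')
   | _ => lift (fire Nc nu t) q end].
have -> : fire C (lift nu) (inl t) = madd Z (embed (mscale (post N t p) (set_bag I'))).
  apply/ffunP => -[[s|q']|[]]; rewrite !ffunE /= ?mem_inl_imset ?addn0 //.
  by move: enp; case: (q' \in O'); case: (q' \in I'); case: (pre N p t);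
    case: (post N t p) => /=; set X := nu _; lia.
have -> : lift (fire Nc nu t) = madd Z (embed (mscale (post N t p) (set_bag O'))).
  apply/ffunP => -[[s|q']|[]]; rewrite !ffunE /= ?addn0 //.
  by move: enp; case: (q' \in O'); case: (pre N p t); case: (post N t p) => /=;
    set X := nu _; lia.
exact/reach_madd/embed_reach/subsound_complete.
Qed.

Lemma lift_reach nu1 nu2 : reach Nc nu1 nu2 -> reach C (lift nu1) (lift nu2).
Proof.
by elim=> [nu|nu t nu' en _ IH]; [apply: reach_refl | apply: reach_trans (lift_fire en) IH].
Qed.

Lemma lift_outer_reach x n :
  reach M (inner x) (mscale n (set_bag O')) -> reach C x (lift (outer x n)).
Proof.
move=> finM; pose W : marking QC := [ffun q => if q is inl (inr _) then 0 else x q].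
have -> : lift (outer x n) = madd W (embed (mscale n (set_bag O'))).
  apply/ffunP => -[[s|q']|b]; rewrite !ffunE /= ?addn0 //.
  + by rewrite valK.
  + by rewrite insubF ?eqxx.
have {1}-> : x = madd W (embed (inner x)).
  by apply/ffunP => -[[s|q']|b]; rewrite !ffunE /= ?addn0.
exact/reach_madd/embed_reach/finM.
Qed.

End Substitution.

Theorem mainTheorem9 (P T P' T' : finType) (N : PN P T) (I O : {set T})
    (M : PN P' T') (I' O' : {set P'}) (p : P) :
  is_tWF N I O -> subsound_t N I O ->
  is_pWF M I' O' -> subsound_p M I' O' ->
  subsound_t (subst_net N p M I' O') (inl @: I) (inl @: O).
Proof.
move=> _ ssN wfM ssM k k' m' le_k'k run.
have [a [c []]] := simulated_reach wfM ssM run (simulated_init N I O M I' O' p k).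
rewrite inner_madd_out outer_madd_out => runM runN.
(* M can complete its a - c pending outputs, and then N its k - k' *)
have finM := ssM a c _ (subsound_out_le_in wfM ssM runM) runM.
have finN := ssN k k' _ le_k'k runN.
apply: reach_trans (lift_outer_reach N I O I' finM) _.
by rewrite -(lift_out O' p); exact (lift_reach p ssM finN).
Qed.
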